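(* Let $\mathcal{E}$ and $\mathcal{S}$ be elementary toposes, let $\mathit{2}$ be the subobject classifier of $\mathcal{S}$, and let $R : \mathcal{S} \rightarrow \mathcal{E}$ be a full and faithful functor with a finite-product preserving left adjoint $L : \mathcal{E} \rightarrow \mathcal{S}$. For a morphism $f : W \rightarrow X$ in $\mathcal{E}$, the following are equivalent: (1) $f$ is internally orthogonal to $R\mathit{2}$; (2) $L f : L W \rightarrow L X$ is an isomorphism in $\mathcal{S}$; (3) for every object $A$ of $\mathcal{S}$, $f$ is internally orthogonal to $R A$.
   Context: A morphism $f : W \rightarrow X$ is internally orthogonal to an object $Z$ if the induced map $Z^f : Z^X \rightarrow Z^W$ is an isomorphism. *)

Set Implicit Arguments.
Set Universe Polymorphism.

Record Category := {
  ob :> Type;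
  hom : ob -> ob -> Type;
  idm : forall a, hom a a;
  comp : forall a b c, hom b c -> hom a b -> hom a c;
  comp_id_l : forall a b (f : hom a b), comp (idm b) f = f;
  comp_id_r : forall a b (f : hom a b), comp f (idm a) = f;
  comp_assoc : forall a b c d (h : hom c d) (g : hom b c) (f : hom a b),
      comp h (comp g f) = comp (comp h g) f
}.
Arguments hom {C} a b : rename.
Arguments idm {C} a : rename.
Arguments comp {C a b c} g f : rename.

Notation "g ∘ f" := (comp g f) (at level 40, left associativity).

Section Basic.
Context {C : Category}.

Definition is_iso {a b : C} (f : hom a b) : Prop :=
  exists g : hom b a, g ∘ f = idm a /\ f ∘ g = idm b.

Definition monic {u x : C} (m : hom u x) : Prop :=
  forall (z : C) (g h : hom z u), m ∘ g = m ∘ h -> g = h.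

Definition is_terminal (t : C) : Prop :=
  forall a : C, exists u : hom a t, forall v : hom a t, v = u.

Definition is_product (a b p : C) (p1 : hom p a) (p2 : hom p b) : Prop :=
  forall (z : C) (f : hom z a) (g : hom z b),
    exists h : hom z p, p1 ∘ h = f /\ p2 ∘ h = g /\
      forall h' : hom z p, p1 ∘ h' = f -> p2 ∘ h' = g -> h' = h.

Definition is_pullback {P x y z : C} (p : hom P x) (q : hom P y)
    (f : hom x z) (g : hom y z) : Prop :=
  f ∘ p = g ∘ q /\
  forall (Q : C) (a : hom Q x) (b : hom Q y), f ∘ a = g ∘ b ->
    exists h : hom Q P, p ∘ h = a /\ q ∘ h = b /\
      forall h' : hom Q P, p ∘ h' = a -> q ∘ h' = b -> h' = h.
End Basic.

Record Topos := {
  tcat :> Category;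
  term : tcat;
  bang : forall a : tcat, hom a term;
  bang_unique : forall (a : tcat) (v : hom a term), v = bang a;
  prod : tcat -> tcat -> tcat;
  pr1 : forall a b, hom (prod a b) a;
  pr2 : forall a b, hom (prod a b) b;
  pair : forall z a b, hom z a -> hom z b -> hom z (prod a b);
  pair_pr1 : forall z a b (f : hom z a) (g : hom z b), pr1 a b ∘ pair z a b f g = f;
  pair_pr2 : forall z a b (f : hom z a) (g : hom z b), pr2 a b ∘ pair z a b f g = g;
  pair_unique : forall z a b (f : hom z a) (g : hom z b) (h : hom z (prod a b)),
      pr1 a b ∘ h = f -> pr2 a b ∘ h = g -> h = pair z a b f g;
  pullbacks : forall (x y z : tcat) (f : hom x z) (g : hom y z),
      exists (P : tcat) (p : hom P x) (q : hom P y), is_pullback p q f g;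
  (** [expo z x] is the exponential z^x *)
  expo : tcat -> tcat -> tcat;
  ev : forall z x, hom (prod (expo z x) x) z;
  curry : forall y x z, hom (prod y x) z -> hom y (expo z x);
  curry_ev : forall y x z (g : hom (prod y x) z),
      ev z x ∘ pair _ _ _ (curry y x z g ∘ pr1 y x) (pr2 y x) = g;
  curry_unique : forall y x z (g : hom (prod y x) z) (h : hom y (expo z x)),
      ev z x ∘ pair _ _ _ (h ∘ pr1 y x) (pr2 y x) = g -> h = curry y x z g;
  omega : tcat;
  tru : hom term omega;
  classifier : forall (u x : tcat) (m : hom u x), monic m ->
      exists chi : hom x omega,
        is_pullback m (bang u) chi tru /\
        forall chi' : hom x omega, is_pullback m (bang u) chi' tru -> chi' = chi
}.
Arguments bang {t} a : rename.
Arguments prod {t} a b : rename.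
Arguments pr1 {t} a b : rename.
Arguments pr2 {t} a b : rename.
Arguments pair {t z a b} f g : rename.
Arguments expo {t} z x : rename.
Arguments ev {t} z x : rename.
Arguments curry {t y x z} g : rename.
Arguments term {t} : rename.
Arguments omega t : clear implicits.

Definition exp_map {T : Topos} (z : T) {w x : T} (f : hom w x) :
    hom (expo z x) (expo z w) :=
  curry (ev z x ∘ pair (pr1 (expo z x) w) (f ∘ pr2 (expo z x) w)).

Definition int_orth {T : Topos} {w x : T} (f : hom w x) (z : T) : Prop :=
  is_iso (exp_map z f).

Record Functor (C D : Category) := {
  fobj :> C -> D;
  fmap : forall a b : C, hom a b -> hom (fobj a) (fobj b);
  fmap_id : forall a, fmap a a (idm a) = idm (fobj a);
  fmap_comp : forall a b c (g : hom b c) (f : hom a b),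
      fmap a c (g ∘ f) = fmap b c g ∘ fmap a b f
}.
Arguments fmap {C D} F {a b} f : rename.

Definition full {C D : Category} (F : Functor C D) : Prop :=
  forall (a b : C) (g : hom (F a) (F b)), exists f : hom a b, fmap F f = g.

Definition faithful {C D : Category} (F : Functor C D) : Prop :=
  forall (a b : C) (f g : hom a b), fmap F f = fmap F g -> f = g.

Record Adjunction {C D : Category} (L : Functor C D) (R : Functor D C) := {
  unit_ : forall a : C, hom a (R (L a));
  counit : forall b : D, hom (L (R b)) b;
  unit_nat : forall (a a' : C) (f : hom a a'),
      fmap R (fmap L f) ∘ unit_ a = unit_ a' ∘ f;
  counit_nat : forall (b b' : D) (g : hom b b'),
      g ∘ counit b = counit b' ∘ fmap L (fmap R g);
  triangle_L : forall a : C, counit (L a) ∘ fmap L (unit_ a) = idm (L a);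
  triangle_R : forall b : D, fmap R (counit b) ∘ unit_ (R b) = idm (R b)
}.

Definition preserves_finite_products {T U : Topos} (F : Functor T U) : Prop :=
  is_terminal (F (@term T)) /\
  forall a b : T, @is_product _ _ _ _ (fmap F (pr1 a b)) (fmap F (pr2 a b)).

(** Since [curry] identifies maps [T -> Z^X] with maps [T × X -> Z], the map
    [Z^f] is invertible iff precomposition with [1_T × f] is a bijection
    [hom (T × X) Z -> hom (T × W) Z] for every [T].  For [Z = R A] the
    adjunction and the product-preservation of [L] turn this into bijectivity
    of precomposition with [1_(L T) × L f] on maps into [A].  This clearly
    holds for every [A] when [L f] is invertible.  Conversely, for [A] the
    subobject classifier, taking [T = W] and classifying the diagonal of [L W]
    shows that [L f] is monic, and taking [T = X] shows that the
    characteristic map of [L f] is [true], so [L f] is invertible. *)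
From Stdlib Require Import Setoid.

Section Orthogonality.
Context {C : Category}.

Definition orth {P Q : C} (u : hom P Q) (A : C) : Prop :=
  (forall k : hom P A, exists k' : hom Q A, k' ∘ u = k) /\
  (forall k1 k2 : hom Q A, k1 ∘ u = k2 ∘ u -> k1 = k2).

Lemma iso_cancel_l {P Q Q' : C} (j : hom Q Q') (g h : hom P Q) :
  is_iso j -> j ∘ g = j ∘ h -> g = h.
Proof.
  intros [j' [Hj'j _]] H.
  rewrite <- (comp_id_l _ _ _ g), <- (comp_id_l _ _ _ h), <- Hj'j,
    <- !comp_assoc, H. reflexivity.
Qed.

Lemma iso_cancel_r {P P' Q : C} (i : hom P' P) (g h : hom P Q) :
  is_iso i -> g ∘ i = h ∘ i -> g = h.
Proof.
  intros [i' [_ Hii']] H.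
  rewrite <- (comp_id_r _ _ _ g), <- (comp_id_r _ _ _ h), <- Hii',
    !comp_assoc, H. reflexivity.
Qed.

Lemma monic_section_iso {P Q : C} (m : hom P Q) (s : hom Q P) :
  monic m -> m ∘ s = idm Q -> is_iso m.
Proof.
  intros Hm Hms. exists s. split; [| exact Hms].
  apply Hm. rewrite comp_assoc, Hms, comp_id_l, comp_id_r. reflexivity.
Qed.

Lemma iso_orth {P Q : C} (u : hom P Q) (A : C) : is_iso u -> orth u A.
Proof.
  intros Hu. split.
  - intros k. destruct Hu as [v [Hvu _]]. exists (k ∘ v).
    rewrite <- comp_assoc, Hvu, comp_id_r. reflexivity.
  - intros k1 k2. apply iso_cancel_r. exact Hu.
Qed.

Lemma orth_comp_iso_r {P P' Q : C} (u : hom P Q) (i : hom P' P) (A : C) :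
  is_iso i -> orth (u ∘ i) A <-> orth u A.
Proof.
  intros Hi. destruct (Hi) as [i' [Hi'i _]].
  split; intros [Hext Hcan]; split.
  - intros k. destruct (Hext (k ∘ i)) as [k' Hk']. exists k'.
    apply (iso_cancel_r i _ _ Hi). rewrite <- comp_assoc. exact Hk'.
  - intros k1 k2 H. apply Hcan. rewrite !comp_assoc, H. reflexivity.
  - intros k. destruct (Hext (k ∘ i')) as [k' Hk']. exists k'.
    rewrite comp_assoc, Hk', <- comp_assoc, Hi'i, comp_id_r. reflexivity.
  - intros k1 k2 H. apply Hcan, (iso_cancel_r i _ _ Hi).
    rewrite <- !comp_assoc. exact H.
Qed.

Lemma orth_comp_iso_l {P Q Q' : C} (u : hom P Q) (j : hom Q Q') (A : C) :
  is_iso j -> orth (j ∘ u) A <-> orth u A.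
Proof.
  intros Hj. destruct (Hj) as [j' [Hj'j Hjj']].
  assert (Hj'u : j' ∘ (j ∘ u) = u) by (rewrite comp_assoc, Hj'j; apply comp_id_l).
  assert (Hj' : is_iso j') by (exists j; split; assumption).
  split; intros [Hext Hcan]; split.
  - intros k. destruct (Hext k) as [k' Hk']. exists (k' ∘ j).
    rewrite <- Hk', comp_assoc. reflexivity.
  - intros k1 k2 H. apply (iso_cancel_r j' _ _ Hj'), Hcan.
    rewrite <- !comp_assoc, Hj'u. exact H.
  - intros k. destruct (Hext k) as [k' Hk']. exists (k' ∘ j').
    rewrite <- comp_assoc, Hj'u. exact Hk'.
  - intros k1 k2 H. apply (iso_cancel_r j _ _ Hj), Hcan.
    rewrite <- !comp_assoc. exact H.
Qed.

Lemma orth_iso_square {P Q P' Q' : C} (u : hom P Q) (v : hom P' Q')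
    (i : hom P P') (j : hom Q Q') (A : C) :
  is_iso i -> is_iso j -> j ∘ u = v ∘ i -> (orth u A <-> orth v A).
Proof.
  intros Hi Hj Hsq.
  rewrite <- (orth_comp_iso_l u j A Hj), Hsq.
  exact (orth_comp_iso_r v i A Hi).
Qed.
End Orthogonality.

Section Adjunction.
Context {C D : Category} {L : Functor C D} {R : Functor D C} (adj : Adjunction L R).

Definition transpose {P : C} {A : D} (k : hom P (R A)) : hom (L P) A :=
  counit adj A ∘ fmap L k.

Definition untranspose {P : C} {A : D} (h : hom (L P) A) : hom P (R A) :=
  fmap R h ∘ unit_ adj P.

Lemma untransposeK {P : C} {A : D} (h : hom (L P) A) :
  transpose (untranspose h) = h.
Proof.
  unfold transpose, untranspose.
  rewrite fmap_comp, comp_assoc, <- counit_nat, <- comp_assoc, triangle_L,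
    comp_id_r. reflexivity.
Qed.

Lemma transposeK {P : C} {A : D} (k : hom P (R A)) :
  untranspose (transpose k) = k.
Proof.
  unfold transpose, untranspose.
  rewrite fmap_comp, <- comp_assoc, unit_nat, comp_assoc, triangle_R,
    comp_id_l. reflexivity.
Qed.

Lemma transpose_comp {P Q : C} {A : D} (k : hom Q (R A)) (u : hom P Q) :
  transpose (k ∘ u) = transpose k ∘ fmap L u.
Proof. unfold transpose. rewrite fmap_comp, comp_assoc. reflexivity. Qed.

Lemma untranspose_comp {P Q : C} {A : D} (h : hom (L Q) A) (u : hom P Q) :
  untranspose (h ∘ fmap L u) = untranspose h ∘ u.
Proof.
  rewrite <- (transposeK (untranspose h ∘ u)), transpose_comp, untransposeK.
  reflexivity.
Qed.

Lemma orth_adjoint {P Q : C} (u : hom P Q) (A : D) :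
  orth u (R A) <-> orth (fmap L u) A.
Proof.
  split; intros [Hext Hcan]; split.
  - intros k. destruct (Hext (untranspose k)) as [k' Hk'].
    exists (transpose k'). rewrite <- transpose_comp, Hk', untransposeK.
    reflexivity.
  - intros k1 k2 H. rewrite <- (untransposeK k1), <- (untransposeK k2).
    f_equal. apply Hcan. rewrite <- !untranspose_comp, H. reflexivity.
  - intros k. destruct (Hext (transpose k)) as [k' Hk'].
    exists (untranspose k'). rewrite <- untranspose_comp, Hk', transposeK.
    reflexivity.
  - intros k1 k2 H. rewrite <- (transposeK k1), <- (transposeK k2).
    f_equal. apply Hcan. rewrite <- !transpose_comp, H. reflexivity.
Qed.
End Adjunction.

Section ToposFacts.
Context {T : Topos}.

Lemma bang_comp (a b : T) (h : hom a b) : bang b ∘ h = bang a.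
Proof. apply bang_unique. Qed.

Lemma pair_comp (y z a b : T) (f : hom z a) (g : hom z b) (h : hom y z) :
  pair f g ∘ h = pair (f ∘ h) (g ∘ h).
Proof.
  apply pair_unique; rewrite comp_assoc;
    [rewrite pair_pr1 | rewrite pair_pr2]; reflexivity.
Qed.

Lemma pair_pr (a b : T) : pair (pr1 a b) (pr2 a b) = idm (prod a b).
Proof. symmetry. apply pair_unique; apply comp_id_r. Qed.

Lemma diag_monic (w : T) : monic (pair (idm w) (idm w)).
Proof.
  intros z g h H. apply (f_equal (comp (pr1 w w))) in H.
  rewrite !comp_assoc, pair_pr1, !comp_id_l in H. exact H.
Qed.

Definition id_times (t : T) {w x : T} (f : hom w x) : hom (prod t w) (prod t x) :=
  pair (pr1 t w) (f ∘ pr2 t w).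

Lemma id_times_pair (t w x y : T) (f : hom w x) (a : hom y t) (b : hom y w) :
  id_times t f ∘ pair a b = pair a (f ∘ b).
Proof.
  unfold id_times. rewrite pair_comp, <- comp_assoc, pair_pr1, pair_pr2.
  reflexivity.
Qed.

Lemma id_times_iso (t w x : T) (f : hom w x) : is_iso f -> is_iso (id_times t f).
Proof.
  intros [g [Hgf Hfg]]. exists (id_times t g).
  assert (Hinv : forall a b (p : hom a b) (q : hom b a),
             p ∘ q = idm b -> id_times t p ∘ id_times t q = idm _).
  { intros a b p q H. unfold id_times at 2.
    rewrite id_times_pair, comp_assoc, H, comp_id_l, pair_pr. reflexivity. }
  split; apply Hinv; assumption.
Qed.

Definition uncurry {y x z : T} (h : hom y (expo z x)) : hom (prod y x) z :=
  ev z x ∘ pair (h ∘ pr1 y x) (pr2 y x).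

Lemma uncurryK (y x z : T) (g : hom (prod y x) z) : uncurry (curry g) = g.
Proof. apply curry_ev. Qed.

Lemma curryK (y x z : T) (h : hom y (expo z x)) : curry (uncurry h) = h.
Proof. symmetry. apply curry_unique. reflexivity. Qed.

Lemma curry_inj (y x z : T) (g1 g2 : hom (prod y x) z) :
  curry g1 = curry g2 -> g1 = g2.
Proof. intros H. rewrite <- (uncurryK _ _ _ g1), H. apply uncurryK. Qed.

Lemma curry_ev_id (z x : T) : curry (ev z x) = idm (expo z x).
Proof.
  symmetry. apply curry_unique. rewrite comp_id_l, pair_pr, comp_id_r.
  reflexivity.
Qed.

Lemma ev_pair_curry (v y x z : T) (g : hom (prod y x) z) (a : hom v y) (b : hom v x) :
  ev z x ∘ pair (curry g ∘ a) b = g ∘ pair a b.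
Proof.
  rewrite <- (uncurryK _ _ _ g) at 2. unfold uncurry.
  rewrite <- comp_assoc, pair_comp, <- comp_assoc, pair_pr1, pair_pr2.
  reflexivity.
Qed.

Lemma exp_map_curry (z t w x : T) (f : hom w x) (k : hom (prod t x) z) :
  exp_map z f ∘ curry k = curry (k ∘ id_times t f).
Proof.
  apply curry_unique. unfold exp_map.
  rewrite <- comp_assoc, ev_pair_curry, <- comp_assoc, pair_comp,
    <- !comp_assoc, pair_pr1, pair_pr2, ev_pair_curry.
  reflexivity.
Qed.

Lemma int_orth_iff_orth (w x z : T) (f : hom w x) :
  int_orth f z <-> forall t : T, orth (id_times t f) z.
Proof.
  split.
  - intros Hiso t. split.
    + intros k. destruct Hiso as [d [_ Hfd]].
      exists (uncurry (d ∘ curry k)). apply curry_inj.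
      rewrite <- exp_map_curry, curryK, comp_assoc, Hfd, comp_id_l.
      reflexivity.
    + intros k1 k2 H. apply curry_inj, (iso_cancel_l (exp_map z f));
        [exact Hiso |].
      rewrite !exp_map_curry, H. reflexivity.
  - intros Horth.
    destruct (proj1 (Horth (expo z w)) (ev z w)) as [k Hk].
    apply (monic_section_iso _ (curry k)).
    + intros v h1 h2 H.
      rewrite <- (curryK _ _ _ h1), <- (curryK _ _ _ h2) in H |- *.
      f_equal. apply (proj2 (Horth v)), curry_inj.
      rewrite <- !exp_map_curry. exact H.
    + rewrite exp_map_curry, Hk. apply curry_ev_id.
Qed.

Lemma monic_of_orth_omega (w x : T) (g : hom w x) :
  orth (id_times w g) (omega T) -> monic g.
Proof.
  intros [Hext _] z a b Hab.
  destruct (classifier T (diag_monic w)) as [chi [[Hchi Hpb] _]].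
  destruct (Hext chi) as [psi Hpsi].
  assert (Hchi_ab : chi ∘ pair a b = tru T ∘ bang z).
  { rewrite <- Hpsi, <- comp_assoc, id_times_pair, <- Hab, <- id_times_pair,
      comp_assoc, Hpsi.
    replace (pair a a) with (pair (idm w) (idm w) ∘ a)
      by (rewrite pair_comp, !comp_id_l; reflexivity).
    rewrite comp_assoc, Hchi, <- comp_assoc, bang_comp. reflexivity. }
  destruct (Hpb z (pair a b) (bang z) Hchi_ab) as [h [Hh _]].
  assert (Ha := f_equal (comp (pr1 w w)) Hh).
  assert (Hb := f_equal (comp (pr2 w w)) Hh).
  rewrite comp_assoc, pair_pr1, comp_id_l, pair_pr1 in Ha.
  rewrite comp_assoc, pair_pr2, comp_id_l, pair_pr2 in Hb.
  rewrite <- Ha, <- Hb. reflexivity.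
Qed.

Lemma iso_of_orth_omega (w x : T) (g : hom w x) :
  orth (id_times w g) (omega T) -> orth (id_times x g) (omega T) -> is_iso g.
Proof.
  intros Hw [_ Hcan].
  assert (Hg : monic g) by exact (monic_of_orth_omega _ _ _ Hw).
  destruct (classifier T Hg) as [chi [[Hchi Hpb] _]].
  assert (Hchi_pr2 : chi ∘ pr2 x x = tru T ∘ bang (prod x x)).
  { apply Hcan. unfold id_times at 1.
    rewrite <- comp_assoc, pair_pr2, comp_assoc, Hchi, <- !comp_assoc,
      !bang_comp. reflexivity. }
  assert (Hchi_true : chi ∘ idm x = tru T ∘ bang x).
  { apply (f_equal (fun m => m ∘ pair (idm x) (idm x))) in Hchi_pr2.
    rewrite <- !comp_assoc, pair_pr2, bang_comp in Hchi_pr2. exact Hchi_pr2. }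
  destruct (Hpb x (idm x) (bang x) Hchi_true) as [s [Hs _]].
  exact (monic_section_iso _ _ Hg Hs).
Qed.
End ToposFacts.

Section ProductPreservingAdjoint.
Context {E S : Topos} {L : Functor E S} {R : Functor S E} (adj : Adjunction L R).
Hypothesis L_binary :
  forall a b : E, @is_product _ _ _ _ (fmap L (pr1 a b)) (fmap L (pr2 a b)).

Definition prod_cmp (t x : E) : hom (L (prod t x)) (prod (L t) (L x)) :=
  pair (fmap L (pr1 t x)) (fmap L (pr2 t x)).

Lemma prod_cmp_iso (t x : E) : is_iso (prod_cmp t x).
Proof.
  destruct (L_binary t x _ (pr1 (L t) (L x)) (pr2 (L t) (L x))) as [h [Hh1 [Hh2 _]]].
  destruct (L_binary t x _ (fmap L (pr1 t x)) (fmap L (pr2 t x))) as [h0 [_ [_ Hh0]]].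
  exists h. unfold prod_cmp. split.
  - rewrite (Hh0 (idm _)) by apply comp_id_r.
    apply Hh0; rewrite comp_assoc;
      [rewrite Hh1, pair_pr1 | rewrite Hh2, pair_pr2]; reflexivity.
  - rewrite pair_comp, Hh1, Hh2. apply pair_pr.
Qed.

Lemma prod_cmp_natural (t w x : E) (f : hom w x) :
  prod_cmp t x ∘ fmap L (id_times t f) = id_times (L t) (fmap L f) ∘ prod_cmp t w.
Proof.
  unfold prod_cmp at 2. rewrite id_times_pair. unfold prod_cmp, id_times.
  rewrite pair_comp, <- !fmap_comp, pair_pr1, pair_pr2, fmap_comp.
  reflexivity.
Qed.

Lemma int_orth_R_iff (w x : E) (f : hom w x) (A : S) :
  int_orth f (R A) <-> forall t : E, orth (id_times (L t) (fmap L f)) A.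
Proof.
  rewrite int_orth_iff_orth.
  split; intros H t; specialize (H t);
    rewrite (orth_adjoint adj), (orth_iso_square _ _ _ _ A (prod_cmp_iso t w)
      (prod_cmp_iso t x) (prod_cmp_natural t w x f)) in *; exact H.
Qed.
End ProductPreservingAdjoint.

Theorem lemma2p5 (E S : Topos) (R : Functor S E) (L : Functor E S)
    (adj : Adjunction L R) (R_full : full R) (R_faithful : faithful R)
    (L_prod : preserves_finite_products L)
    (W X : E) (f : hom W X) :
  (int_orth f (R (omega S)) <-> is_iso (fmap L f)) /\
  (is_iso (fmap L f) <-> forall A : S, int_orth f (R A)).
Proof.
  pose proof (int_orth_R_iff adj (proj2 L_prod) W X f) as Hchar.
  assert (Hiso_orth : is_iso (fmap L f) -> forall A : S, int_orth f (R A)).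
  { intros Hiso A. apply Hchar. intros t. apply iso_orth, id_times_iso, Hiso. }
  assert (Horth_iso : int_orth f (R (omega S)) -> is_iso (fmap L f)).
  { intros Horth. apply iso_of_orth_omega; apply (proj1 (Hchar _) Horth). }
  split; split; auto.
Qed.
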